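(* Fix real numbers $a$, $b>0$, $c>0$, and let $P(x,y)=\tfrac12+(x-y)\bigl(c-b(x+y)+axy\bigr)$. Let $\mathcal D=\{(x,y)\in\mathbb R_+^2: 0<P(x,y)<1\}$. Then $\mathcal D$ is a non-convex set that contains the diagonal $\{(x,x):x\ge 0\}$, is symmetric with respect to the reflection $(x,y)\mapsto(y,x)$, is unbounded along the diagonal, and is bounded along every non-diagonal ray in $\mathbb R_+^2$, i.e. for every $(u,v)\in\mathbb R_+^2$ with $u\neq v$, the set $\{r\ge 0: (ru,rv)\in\mathcal D\}$ is bounded.
   Context: $\mathbb R_+=[0,\infty)$. *)

From Stdlib Require Import Reals.
Open Scope R_scope.

Definition Ppoly (a b c x y : R) : R :=
  / 2 + (x - y) * (c - b * (x + y) + a * x * y).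

Definition Dset (a b c : R) (p : R * R) : Prop :=
  0 <= fst p /\ 0 <= snd p /\ 0 < Ppoly a b c (fst p) (snd p) < 1.

Definition convex2 (S : R * R -> Prop) : Prop :=
  forall p q t, S p -> S q -> 0 <= t <= 1 ->
    S ((1 - t) * fst p + t * fst q, (1 - t) * snd p + t * snd q).

Definition boundedR (A : R -> Prop) : Prop :=
  exists M, forall r, A r -> Rabs r <= M.

(** Everything follows from two identities for [P]: [P(y,x) = 1 - P(x,y)] and
    [P(x,x) = 1/2], and from one growth fact: a real polynomial of degree one
    or two has unbounded absolute value on [0, +oo).  Membership in [D] says
    [|P - 1/2| < 1/2].  Along a ray [r (u,v)], [P - 1/2] is [r (u - v)] times
    a quadratic in [r] with linear coefficient [-b (u + v) <> 0], so [r] is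
    bounded.  For non-convexity, a point [(s,0)] of [D] close to the origin
    and a far diagonal point [(X,X)] have a midpoint where [P - 1/2] is [s/2]
    times a non-constant quadratic in [X], hence leaves [D] for large [X]. *)

From Stdlib Require Import Reals Lra Psatz.
Open Scope R_scope.

Lemma linear_abs_eventually_ge (al be M : R) :
  be <> 0 ->
  exists R0, 0 <= R0 /\ forall X, R0 <= X -> M <= Rabs (al + be * X).
Proof.
  intros hbe.
  assert (hb : 0 < Rabs be) by (apply Rabs_pos_lt; exact hbe).
  pose proof (Rabs_pos al). pose proof (Rle_abs M).
  assert (hR0 : 0 <= (Rabs al + Rabs M) / Rabs be).
  { apply Rle_mult_inv_pos; [pose proof (Rabs_pos M); lra | exact hb]. }
  exists ((Rabs al + Rabs M) / Rabs be). split; [exact hR0 |].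
  intros X hX.
  assert (hbX : Rabs al + Rabs M <= Rabs be * X).
  { apply (Rmult_le_compat_l (Rabs be)) in hX; [| lra].
    field_simplify in hX; lra. }
  pose proof (Rabs_triang_inv (be * X) (- al)) as htri.
  rewrite Rabs_Ropp, Rabs_mult, (Rabs_pos_eq X) in htri by lra.
  replace (be * X - - al) with (al + be * X) in htri by ring.
  lra.
Qed.

Lemma quadratic_abs_eventually_ge (al be ga M : R) :
  be <> 0 \/ ga <> 0 ->
  exists R0, 0 <= R0 /\
    forall X, R0 <= X -> M <= Rabs (al + be * X + ga * X ^ 2).
Proof.
  intros hdeg. destruct (Req_dec ga 0) as [-> | hga].
  - destruct hdeg as [hbe | []]; [| reflexivity].
    destruct (linear_abs_eventually_ge al be M hbe) as [R0 [hR0 H]].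
    exists R0. split; [exact hR0 |]. intros X hX.
    replace (al + be * X + 0 * X ^ 2) with (al + be * X) by ring. auto.
  - (* [al + be X + ga X^2 = al + X (be + ga X)], and the inner factor is linear. *)
    destruct (linear_abs_eventually_ge be ga (Rabs al + Rabs M) hga)
      as [R1 [hR1 H]].
    exists (Rmax 1 R1). split; [pose proof (Rmax_l 1 R1); lra |].
    intros X hX.
    assert (hX1 : 1 <= X) by (pose proof (Rmax_l 1 R1); lra).
    assert (hlin := H X ltac:(pose proof (Rmax_r 1 R1); lra)).
    pose proof (Rabs_triang_inv (X * (be + ga * X)) (- al)) as htri.
    rewrite Rabs_Ropp, Rabs_mult, (Rabs_pos_eq X ltac:(lra)) in htri.
    replace (X * (be + ga * X) - - al) with (al + be * X + ga * X ^ 2) in htri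
      by ring.
    pose proof (Rabs_pos (be + ga * X)). pose proof (Rle_abs M). nra.
Qed.

Lemma not_boundedR_of_nonneg (A : R -> Prop) :
  (forall r, 0 <= r -> A r) -> ~ boundedR A.
Proof.
  intros hA [M HM].
  pose proof (Rabs_pos M). pose proof (Rle_abs M).
  specialize (HM (Rabs M + 1) (hA (Rabs M + 1) ltac:(lra))).
  rewrite Rabs_pos_eq in HM; lra.
Qed.

Section Region.

Variables a b c : R.

Lemma Ppoly_diag (x : R) : Ppoly a b c x x = / 2.
Proof. unfold Ppoly. ring. Qed.

Lemma Ppoly_swap (x y : R) : Ppoly a b c y x = 1 - Ppoly a b c x y.
Proof. unfold Ppoly. field. Qed.

Lemma Ppoly_ray (r u v : R) :
  Ppoly a b c (r * u) (r * v) - / 2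
  = r * (u - v) * (c + - (b * (u + v)) * r + a * u * v * r ^ 2).
Proof. unfold Ppoly. field. Qed.

Lemma Ppoly_midpoint (s X : R) :
  Ppoly a b c ((1 - / 2) * s + / 2 * X) ((1 - / 2) * 0 + / 2 * X) - / 2
  = s / 2 * ((c - b * s / 2) + (a * s / 4 - b) * X + a / 4 * X ^ 2).
Proof. unfold Ppoly. field. Qed.

Lemma Dset_diag (x : R) : 0 <= x -> Dset a b c (x, x).
Proof. intros hx. unfold Dset; simpl. rewrite Ppoly_diag. lra. Qed.

Lemma Dset_swap (x y : R) : Dset a b c (x, y) -> Dset a b c (y, x).
Proof.
  unfold Dset; simpl. rewrite Ppoly_swap. intros [hx [hy hP]]. lra.
Qed.

Lemma Dset_Rabs_Ppoly (x y : R) :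
  Dset a b c (x, y) -> Rabs (Ppoly a b c x y - / 2) < / 2.
Proof. intros [_ [_ hP]]. simpl in hP. apply Rabs_def1; lra. Qed.

Hypotheses (hb : 0 < b) (hc : 0 < c).

Lemma Dset_near_origin : exists s, 0 < s /\ Dset a b c (s, 0).
Proof.
  (* For [s = c / (2c^2 + b)]: [0 <= c - b s] and [s (c - b s) <= s c < 1/2]. *)
  set (s := c / (2 * c * c + b)).
  assert (hs : 0 < s) by (apply Rdiv_lt_0_compat; nra).
  assert (hsc : s * c < / 2).
  { unfold s. apply (Rmult_lt_reg_r (2 * (2 * c * c + b))); [nra |].
    field_simplify; nra. }
  assert (hbs : b * s <= c).
  { unfold s. apply (Rmult_le_reg_r (2 * c * c + b)); [nra |].
    field_simplify; nra. }
  exists s. split; [exact hs |].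
  unfold Dset, Ppoly; simpl. nra.
Qed.

Lemma Dset_not_convex : ~ convex2 (Dset a b c).
Proof.
  intros hconv.
  destruct Dset_near_origin as [s [hs hDs]].
  assert (hdeg : a * s / 4 - b <> 0 \/ a / 4 <> 0).
  { destruct (Req_dec a 0) as [-> | ha]; [left | right]; lra. }
  destruct (quadratic_abs_eventually_ge (c - b * s / 2) (a * s / 4 - b) (a / 4)
              (/ s) hdeg) as [X [hX hgrow]].
  pose proof (Dset_Rabs_Ppoly _ _
    (hconv _ _ (/ 2) hDs (Dset_diag X hX) ltac:(lra))) as hmid.
  simpl in hmid. rewrite Ppoly_midpoint, Rabs_mult in hmid.
  rewrite (Rabs_pos_eq (s / 2)) in hmid by lra.
  specialize (hgrow X (Rle_refl X)).
  apply (Rmult_le_compat_l (s / 2)) in hgrow; [| lra].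
  replace (s / 2 * / s) with (/ 2) in hgrow by (field; lra).
  lra.
Qed.

Lemma Dset_ray_bounded (u v : R) :
  0 <= u -> 0 <= v -> u <> v ->
  boundedR (fun r => 0 <= r /\ Dset a b c (r * u, r * v)).
Proof.
  intros hu hv huv.
  assert (hd : 0 < Rabs (u - v)) by (apply Rabs_pos_lt; lra).
  assert (hdeg : - (b * (u + v)) <> 0 \/ a * u * v <> 0) by (left; nra).
  destruct (quadratic_abs_eventually_ge c (- (b * (u + v))) (a * u * v) 1 hdeg)
    as [R0 [hR0 hgrow]].
  exists (R0 + / (2 * Rabs (u - v))). intros r [hr hD].
  rewrite Rabs_pos_eq by exact hr.
  destruct (Rle_or_lt r R0) as [hle | hgt].
  { pose proof (Rinv_0_lt_compat (2 * Rabs (u - v)) ltac:(lra)). lra. }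
  pose proof (Dset_Rabs_Ppoly _ _ hD) as hP.
  rewrite Ppoly_ray, !Rabs_mult, (Rabs_pos_eq r hr) in hP.
  specialize (hgrow r (Rlt_le _ _ hgt)).
  assert (hrd : r * Rabs (u - v) < / 2) by nra.
  assert (hr_lt : r < / (2 * Rabs (u - v))).
  { apply (Rmult_lt_reg_r (2 * Rabs (u - v))); [lra |].
    rewrite Rinv_l by lra. lra. }
  lra.
Qed.

End Region.

Theorem mainTheorem2 (a b c : R) (hb : 0 < b) (hc : 0 < c) :
  ~ convex2 (Dset a b c)
  /\ (forall x, 0 <= x -> Dset a b c (x, x))
  /\ (forall x y, Dset a b c (x, y) -> Dset a b c (y, x))
  /\ ~ boundedR (fun r => 0 <= r /\ Dset a b c (r, r))
  /\ (forall u v, 0 <= u -> 0 <= v -> u <> v ->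
        boundedR (fun r => 0 <= r /\ Dset a b c (r * u, r * v))).
Proof.
  split; [| split; [| split; [| split]]].
  - exact (Dset_not_convex a b c hb hc).
  - exact (Dset_diag a b c).
  - exact (Dset_swap a b c).
  - apply not_boundedR_of_nonneg. intros r hr.
    split; [exact hr | exact (Dset_diag a b c r hr)].
  - exact (Dset_ray_bounded a b c hb).
Qed.
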